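(* Let $V$ be a finite nonempty set of voters, $A$ a finite set of alternatives, and $F:\mathcal{P}(V,A)\to S_2(A)$ an irreducible, weakly viable consular election rule satisfying SPP and SPO. Let $R\subseteq S_2(A)$ be the range of $F$ and let $D=\{\alpha(L)|_R : L \text{ a linear order on } A\}$. Then $D$ is a linked domain of linear orders over the set $R$.
   Context: A profile assigns to each voter $i\in V$ a linear order $P_i$ on $A$; $P_i'P_{-i}$ replaces voter $i$'s order by $P_i'$; $P|_B$ denotes restriction to $B\subseteq A$. $S_2(A)$ is the set of 2-element subsets of $A$; a consular election rule is a map $F:\mathcal{P}(V,A)\to S_2(A)$. $\mathrm{best}(P_i,W)$, $\mathrm{worst}(P_i,W)$ denote the $P_i$-best and $P_i$-worst elements of nonempty $W\subseteq A$. SPO: for all $P$, $i$, $P_i'$, $\mathrm{best}(P_i,F(P))\succeq_i\mathrm{best}(P_i,F(P_i'P_{-i}))$; SPP: same with $\mathrm{worst}$. Weakly viable: every $a\in A$ lies in $F(P)$ for some $P$. Reducible: there is a partition $A=B\uplus C$ and social choice functions $G:\mathcal{P}(V,B)\to B$, $H:\mathcal{P}(V,C)\to C$ with $F(P)=\{G(P|_B),H(P|_C)\}$ for all $P$; irreducible means not reducible. For a linear order $L$ on $A$, $\alpha(L)$ is the linear order on $S_2(A)$ given by: $X$ is above $Y$ iff $\mathrm{best}(L,X)$ is above $\mathrm{best}(L,Y)$ in $L$, or $\mathrm{best}(L,X)=\mathrm{best}(L,Y)$ and $\mathrm{worst}(L,X)$ is above $\mathrm{worst}(L,Y)$; $\alpha(L)|_R$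 is its restriction to $R$. Given a domain $D$ of linear orders over a finite set $R$, two elements $x,y\in R$ are connected in $D$ if there are orders in $D$ ranking $x$ first and $y$ second, and $y$ first and $x$ second, respectively. $D$ is linked if $R$ can be enumerated as $x_1,\dots,x_q$ such that $x_1$ is connected to $x_2$ and for every $j\ge 3$, $x_j$ is connected to at least two elements of $\{x_1,\dots,x_{j-1}\}$. *)

From mathcomp Require Import all_boot.
Set Implicit Arguments. Unset Strict Implicit. Unset Printing Implicit Defensive.

(* A (strict) linear order on a finite type: L x y means "x is ranked above y". *)
Definition linear_order (T : finType) (L : rel T) : Prop :=
  irreflexive L /\ transitive L /\ (forall x y, x != y -> L x y || L y x).

Definition is_profile (V T : finType) (P : V -> rel T) : Prop :=
  forall v, linear_order (P v).

Definition upd (V T : finType) (P : V -> rel T) (i : V) (L : rel T) : V -> rel T :=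
  fun v => if v == i then L else P v.

Definition restr (V T : finType) (P : V -> rel T) (B : {set T})
  : V -> rel {x : T | x \in B} :=
  fun v x y => P v (val x) (val y).

Definition is_best (T : finType) (L : rel T) (W : {set T}) (x : T) : Prop :=
  x \in W /\ forall y, y \in W -> y != x -> L x y.
Definition is_worst (T : finType) (L : rel T) (W : {set T}) (x : T) : Prop :=
  x \in W /\ forall y, y \in W -> y != x -> L y x.

Definition weakly_above (T : finType) (L : rel T) (a b : T) : Prop :=
  a = b \/ L a b.

Definition consular (V A : finType) (F : (V -> rel A) -> {set A}) : Prop :=
  forall P, is_profile P -> #|F P| = 2.

Definition SPO (V A : finType) (F : (V -> rel A) -> {set A}) : Prop :=
  forall P i L', is_profile P -> linear_order L' ->
    forall a b, is_best (P i) (F P) a -> is_best (P i) (F (upd P i L')) b ->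
      weakly_above (P i) a b.

Definition SPP (V A : finType) (F : (V -> rel A) -> {set A}) : Prop :=
  forall P i L', is_profile P -> linear_order L' ->
    forall a b, is_worst (P i) (F P) a -> is_worst (P i) (F (upd P i L')) b ->
      weakly_above (P i) a b.

Definition weakly_viable (V A : finType) (F : (V -> rel A) -> {set A}) : Prop :=
  forall a : A, exists P, is_profile P /\ a \in F P.

Definition reducible (V A : finType) (F : (V -> rel A) -> {set A}) : Prop :=
  exists B C : {set A}, B :&: C = set0 /\ B :|: C = setT /\
    exists (G : (V -> rel {x : A | x \in B}) -> {x : A | x \in B})
           (H : (V -> rel {x : A | x \in C}) -> {x : A | x \in C}),
      forall P, is_profile P ->
        F P = [set val (G (@restr V A P B)); val (H (@restr V A P C))].

Definition irreducible (V A : finType) (F : (V -> rel A) -> {set A}) : Prop :=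
  ~ reducible F.

Definition in_range (V A : finType) (F : (V -> rel A) -> {set A}) (X : {set A}) : Prop :=
  exists P, is_profile P /\ F P = X.

Definition alpha (A : finType) (L : rel A) (X Y : {set A}) : Prop :=
  exists bx by_ wx wy,
    is_best L X bx /\ is_best L Y by_ /\ is_worst L X wx /\ is_worst L Y wy /\
    (L bx by_ \/ (bx = by_ /\ L wx wy)).

(* D = { alpha(L)|_R : L linear order on A } ; an element of D is represented by
   the relation alpha L, only ever evaluated on elements of R. *)
Definition alpha_domain (A : finType) (M : {set A} -> {set A} -> Prop) : Prop :=
  exists L : rel A, linear_order L /\ M = alpha L.

Definition linear_on (T : Type) (R : T -> Prop) (M : T -> T -> Prop) : Prop :=
  (forall x, R x -> ~ M x x) /\
  (forall x y z, R x -> R y -> R z -> M x y -> M y z -> M x z) /\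
  (forall x y, R x -> R y -> x <> y -> M x y \/ M y x).

Definition first_second (T : Type) (R : T -> Prop) (M : T -> T -> Prop) (x y : T) : Prop :=
  R x /\ R y /\ x <> y /\
  (forall z, R z -> z <> x -> M x z) /\
  (forall z, R z -> z <> x -> z <> y -> M y z).

Definition connected_in (T : Type) (R : T -> Prop) (D : (T -> T -> Prop) -> Prop) (x y : T) : Prop :=
  (exists M, D M /\ first_second R M x y) /\ (exists M, D M /\ first_second R M y x).

Definition linked (T : eqType) (R : T -> Prop) (D : (T -> T -> Prop) -> Prop) : Prop :=
  exists (s : seq T) (x0 : T),
    uniq s /\ (forall x, x \in s <-> R x) /\ 2 <= size s /\
    connected_in R D (nth x0 s 0) (nth x0 s 1) /\
    (forall j, 2 <= j < size s ->
       exists j1 j2, j1 < j /\ j2 < j /\ j1 <> j2 /\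
         connected_in R D (nth x0 s j) (nth x0 s j1) /\
         connected_in R D (nth x0 s j) (nth x0 s j2)).

From mathcomp Require Import all_boot.
From mathcomp Require Import boolp.
Set Implicit Arguments. Unset Strict Implicit. Unset Printing Implicit Defensive.

(* Call p and q paired when {p, q} lies in the range R of F.  By SPO and SPP, when a voter
   switches to an order L, the L-best and the L-worst elements of the outcome can only
   rise in L, so the unanimous profile at L does at least as well as any profile.  With
   L = s > t > u > ... this shows: if {s, t} is not in R and {t, u} is, then {s, u} is; hence
   being unpaired is an equivalence relation.  Without a paired triangle there would be two
   classes, each outcome would take one alternative from each, and a further manipulation
   argument shows that each of them depends only on the restriction of the profile to its
   class: F would be reducible.  So there is a triangle x, y, z.  Two pairs {t, u}, {t, w}
   of R are connected in D, through t > u > w and t > w > u.  Enumerate R as the triangle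
   pairs, then the other pairs meeting {x, y, z}, then the rest: a pair {p, w} of the second
   kind shares p with two triangle pairs, and a pair {u, v} of the third kind shares u and v
   with {p, u} and {p, v}, where p is a triangle vertex paired with both u and v; it exists
   because u and v are each in the class of at most one vertex. *)

Section LinearOrder.
Variables (T : finType) (L : rel T).
Hypothesis linL : linear_order L.

Lemma linear_irr x : L x x = false.
Proof. by case: linL. Qed.

Lemma linear_trans : transitive L.
Proof. by case: linL => _ []. Qed.

Lemma linear_asym x y : L x y -> L y x = false.
Proof. by move=> Lxy; apply/negP => /(linear_trans Lxy); rewrite linear_irr. Qed.

Lemma linear_total x y : x != y -> L x y \/ L y x.
Proof. by case: linL => _ [_ tot] /tot /orP. Qed.

Lemma linear_neq x y : L x y -> x != y.
Proof. by apply: contraTneq => ->; rewrite linear_irr. Qed.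

Lemma is_best_pair p q : L p q -> is_best L [set p; q] p.
Proof.
move=> Lpq; split=> [|y]; first by rewrite !inE eqxx.
by rewrite !inE => /orP[] /eqP-> //; rewrite eqxx.
Qed.

Lemma is_worst_pair p q : L p q -> is_worst L [set p; q] q.
Proof.
move=> Lpq; split=> [|y]; first by rewrite !inE eqxx orbT.
by rewrite !inE => /orP[] /eqP-> //; rewrite eqxx.
Qed.

Lemma card2_linear (X : {set T}) : #|X| = 2 -> exists b w, X = [set b; w] /\ L b w.
Proof.
move=> /eqP /cards2P [p [q [pq ->]]].
by case: (linear_total pq) => ?; [exists p, q | exists q, p; rewrite setUC].
Qed.

Lemma is_best_uniq (X : {set T}) a b : is_best L X a -> is_best L X b -> a = b.
Proof.
move=> [aX Ha] [bX Hb]; apply/eqP/negP => /negP ab.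
have Lab : L a b by apply: Ha; rewrite // eq_sym.
by move: (Hb a aX ab); rewrite (linear_asym Lab).
Qed.

Lemma is_worst_uniq (X : {set T}) a b : is_worst L X a -> is_worst L X b -> a = b.
Proof.
move=> [aX Ha] [bX Hb]; apply/eqP/negP => /negP ab.
have Lba : L b a by apply: Ha; rewrite // eq_sym.
by move: (Hb a aX ab); rewrite (linear_asym Lba).
Qed.

Lemma weakly_above_trans a b c :
  weakly_above L a b -> weakly_above L b c -> weakly_above L a c.
Proof.
case=> [->|Lab] [<-|Lbc]; rewrite /weakly_above; auto.
by right; apply: linear_trans Lbc.
Qed.

Lemma alpha_pairE b1 w1 b2 w2 : L b1 w1 -> L b2 w2 ->
  alpha L [set b1; w1] [set b2; w2] = (L b1 b2 \/ b1 = b2 /\ L w1 w2).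
Proof.
move=> Lbw1 Lbw2; apply: propext; split; last first.
  by exists b1, b2, w1, w2; move: (is_best_pair Lbw1) (is_best_pair Lbw2)
    (is_worst_pair Lbw1) (is_worst_pair Lbw2).
move=> [b1' [b2' [w1' [w2' [hb1 [hb2 [hw1 [hw2]]]]]]]].
rewrite -(is_best_uniq (is_best_pair Lbw1) hb1) -(is_best_uniq (is_best_pair Lbw2) hb2).
by rewrite -(is_worst_uniq (is_worst_pair Lbw1) hw1) -(is_worst_uniq (is_worst_pair Lbw2) hw2).
Qed.

Lemma alpha_linear_on_pairs : linear_on (fun X : {set T} => #|X| = 2) (alpha L).
Proof.
split; [|split].
- move=> X /card2_linear [b [w [-> Lbw]]].
  by rewrite alpha_pairE // !linear_irr => -[|[]].
- move=> X Y Z /card2_linear [b1 [w1 [-> h1]]] /card2_linear [b2 [w2 [-> h2]]].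
  move=> /card2_linear [b3 [w3 [-> h3]]]; rewrite !alpha_pairE //.
  case=> [L12|[<- L12]] [L23|[<- L23]]; try by [left].
    by left; apply: linear_trans L23.
  by right; split=> //; apply: linear_trans L23.
- move=> X Y /card2_linear [b1 [w1 [-> h1]]] /card2_linear [b2 [w2 [-> h2]]] neq.
  rewrite !alpha_pairE //; have [Eb|nb] := eqVneq b1 b2.
    have nw : w1 != w2 by apply: contra_notN neq => /eqP ->; rewrite Eb.
    by case: (linear_total nw); [left|right]; right.
  by case: (linear_total nb); [left|right]; left.
Qed.

Definition dominates (X Y : {set T}) : Prop :=
  (forall a b, is_best L X a -> is_best L Y b -> weakly_above L a b) /\
  (forall a b, is_worst L X a -> is_worst L Y b -> weakly_above L a b).

Lemma dominates_refl (X : {set T}) : dominates X X.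
Proof.
by split=> a b ha hb; left; [apply: is_best_uniq ha hb | apply: is_worst_uniq ha hb].
Qed.

Lemma dominates_trans (X Y Z : {set T}) :
  #|Y| = 2 -> dominates X Y -> dominates Y Z -> dominates X Z.
Proof.
move=> /card2_linear [b [w [-> Lbw]]] [hXb hXw] [hYb hYw].
have [bY wY] := (is_best_pair Lbw, is_worst_pair Lbw).
split=> a c ha hc; apply: weakly_above_trans.
- exact: hXb ha bY.
- exact: hYb bY hc.
- exact: hXw ha wY.
- exact: hYw wY hc.
Qed.

Lemma dominates_pair b w b' w' : L b w -> L b' w' ->
  dominates [set b; w] [set b'; w'] -> weakly_above L b b' /\ weakly_above L w w'.
Proof.
move=> Lbw Lbw' [hb hw]; split; first exact: hb (is_best_pair Lbw) (is_best_pair Lbw').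
exact: hw (is_worst_pair Lbw) (is_worst_pair Lbw').
Qed.

Lemma weakly_above_below a b : weakly_above L a b -> L b a = false.
Proof. by case=> [->|/linear_asym //]; rewrite linear_irr. Qed.

End LinearOrder.

Lemma linear_on_sub (T : Type) (R R' : T -> Prop) (M : T -> T -> Prop) :
  (forall x, R' x -> R x) -> linear_on R M -> linear_on R' M.
Proof.
move=> sub [irr [tr tot]]; split; [|split].
- by move=> x /sub; apply: irr.
- by move=> x y z /sub hx /sub hy /sub hz; apply: tr.
- by move=> x y /sub hx /sub hy; apply: tot.
Qed.

Lemma set2_neq (T : finType) (a b c d : T) : c \notin [set a; b] -> [set a; b] != [set d; c].
Proof. by apply: contraNneq => ->; rewrite set22. Qed.

Lemma card2_mem (T : finType) (X : {set T}) x :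
  #|X| = 2 -> x \in X -> exists2 y, y != x & X = [set x; y].
Proof.
move=> /eqP /cards2P [p [q [pq ->]]] /set2P [->|->]; first by exists q; rewrite // eq_sym.
by exists p; rewrite // setUC.
Qed.

Definition rank_first (T : finType) (l : seq T) : rel T :=
  fun x y => index x (l ++ enum T) < index y (l ++ enum T).

Section RankFirst.
Variable T : finType.
Implicit Types (a x y : T) (l : seq T).

Lemma rank_first_linear l : linear_order (rank_first l).
Proof.
have mem x : x \in l ++ enum T by rewrite mem_cat mem_enum orbT.
split; [|split]; rewrite /rank_first.
- by move=> x; rewrite ltnn.
- by move=> y x z; apply: ltn_trans.
- move=> x y; apply: contraNT; rewrite negb_or -leqNgt -leqNgt -eqn_leq => /eqP E.
  by rewrite -[y](nth_index x (mem y)) E nth_index.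
Qed.

Lemma rank_first_head a l x : x != a -> rank_first (a :: l) a x.
Proof. by move=> xa; rewrite /rank_first /= eqxx eq_sym (negbTE xa). Qed.

Lemma rank_first_cons a l x y :
  x != a -> y != a -> rank_first (a :: l) x y = rank_first l x y.
Proof. by move=> xa ya; rewrite /rank_first /= !(eq_sym a) (negbTE xa) (negbTE ya). Qed.

Lemma rank_first_above_head a l x : rank_first (a :: l) x a = false.
Proof. by rewrite /rank_first /= eqxx ltn0. Qed.

Lemma rank_first_above_cons a l x y :
  rank_first (a :: l) x y -> x = a \/ rank_first l x y.
Proof.
have [->|xa] := eqVneq x a; first by left.
have [->|ya] := eqVneq y a; first by rewrite rank_first_above_head.
by rewrite rank_first_cons //; right.
Qed.

End RankFirst.

Section Profiles.
Variables V T : finType.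
Implicit Types (P Q : V -> rel T) (L : rel T) (i : V).

Lemma upd_eq P i L : upd P i L i = L.
Proof. by rewrite /upd eqxx. Qed.

Lemma upd_upd P i L1 L2 : upd (upd P i L1) i L2 = upd P i L2.
Proof. by apply: funext => v; rewrite /upd; case: (v == i). Qed.

Lemma upd_id P i : upd P i (P i) = P.
Proof. by apply: funext => v; rewrite /upd; case: eqP => [->|]. Qed.

Lemma upd_profile P i L : is_profile P -> linear_order L -> is_profile (upd P i L).
Proof. by move=> hP hL v; rewrite /upd; case: (v == i). Qed.

Lemma upd_chain (Pr : (V -> rel T) -> Prop) P P' :
  Pr P ->
  (forall Q i, (forall v, Q v = P v \/ Q v = P' v) -> Pr Q -> Pr (upd Q i (P' i))) ->
  Pr P'.
Proof.
move=> PrP step; pose mix (s : seq V) v := if v \in s then P' v else P v.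
have mixE s v : mix s v = P v \/ mix s v = P' v by rewrite /mix; case: (v \in s); auto.
have Pr_mix s : Pr (mix s).
  elim: s => [|i s IH]; first by have -> : mix [::] = P by apply: funext.
  have -> : mix (i :: s) = upd (mix s) i (P' i).
    by apply: funext => v; rewrite /mix /upd in_cons; case: eqP => [->|].
  exact: step.
by have <- : mix (enum V) = P' by apply: funext => v; rewrite /mix mem_enum.
Qed.

End Profiles.

Section LinkedSeq.
Variables (T : eqType) (conn : T -> T -> Prop) (x0 : T).

Definition linked_seq (s : seq T) : Prop :=
  2 <= size s /\ conn (nth x0 s 0) (nth x0 s 1) /\
  (forall j, 2 <= j < size s ->
     exists j1 j2, j1 < j /\ j2 < j /\ j1 <> j2 /\
       conn (nth x0 s j) (nth x0 s j1) /\ conn (nth x0 s j) (nth x0 s j2)).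

Lemma linked_seq_pair a b : conn a b -> linked_seq [:: a; b].
Proof. by move=> ab; do 2 split=> //; case=> [|[|[]]]. Qed.

Lemma linked_seq_cat (s t : seq T) : linked_seq s ->
  (forall y, y \in t -> exists a b, [/\ a \in s, b \in s, a != b, conn y a & conn y b]) ->
  linked_seq (s ++ t).
Proof.
move=> [s2 [c01 hs]] ht.
split; first by rewrite size_cat (leq_trans s2 (leq_addr _ _)).
split; first by rewrite !nth_cat (ltn_trans _ s2) // s2.
move=> j /andP[j2 jst]; have [js|sj] := ltnP j (size s).
  have [j1 [j2' [lt1 [lt2 [ne [c1 c2]]]]]] := hs j (introT andP (conj j2 js)).
  by exists j1, j2'; rewrite !nth_cat js !(ltn_trans _ js).
have yt : nth x0 (s ++ t) j \in t.
  by rewrite nth_cat ltnNge sj /= mem_nth // ltn_subLR // -size_cat.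
have [a [b [aS bS ab ca cb]]] := ht _ yt.
have nth_index_cat c : c \in s -> nth x0 (s ++ t) (index c s) = c.
  by move=> cs; rewrite nth_cat index_mem cs nth_index.
exists (index a s), (index b s); rewrite !nth_index_cat //.
split; first by apply: leq_trans sj; rewrite index_mem.
split; first by apply: leq_trans sj; rewrite index_mem.
split=> // E; move/eqP: ab; apply.
by rewrite -(nth_index x0 aS) E nth_index.
Qed.

End LinkedSeq.

Lemma linked_seq_linked (T : eqType) (R : T -> Prop) (D : (T -> T -> Prop) -> Prop)
    (x0 : T) (s : seq T) :
  uniq s -> (forall x, x \in s <-> R x) -> linked_seq (connected_in R D) x0 s -> linked R D.
Proof. by move=> us memR [s2 [c01 hs]]; exists s, x0. Qed.

Section ConsularRule.
Variables (V A : finType) (F : (V -> rel A) -> {set A}).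
Hypotheses (consF : consular F) (spoF : SPO F) (sppF : SPP F).

Lemma in_range_card X : in_range F X -> #|X| = 2.
Proof. by move=> [P [hP <-]]; apply: consF. Qed.

Lemma in_range_profile L : linear_order L -> in_range F (F (fun _ => L)).
Proof. by move=> linL; exists (fun _ => L); split. Qed.

Lemma dominates_deviation P i L' : is_profile P -> linear_order L' ->
  dominates (P i) (F P) (F (upd P i L')).
Proof. by move=> hP hL'; split; [apply: spoF | apply: sppF]. Qed.

Lemma dominates_unanimous L Q : linear_order L -> is_profile Q ->
  dominates L (F (fun _ => L)) (F Q).
Proof.
move=> linL hQ.
apply: (@upd_chain _ _ (fun R => dominates L (F R) (F Q)) Q) => [|R i mixR domR].
  exact: dominates_refl.
have hR : is_profile R by move=> v; case: (mixR v) => ->.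
apply: dominates_trans (consF hR) _ domR => //.
have := dominates_deviation i (upd_profile i hR linL) (hR i).
by rewrite upd_eq upd_upd upd_id.
Qed.

Definition splits_range (S : {set A}) : Prop :=
  forall X, in_range F X -> exists p q, [/\ X = [set p; q], p \in S & q \notin S].

Section Side.
Variables (S : {set A}) (d : A).
Hypothesis splitS : splits_range S.

Definition side (P : V -> rel A) : A := odflt d [pick x in F P :&: S].

Lemma in_range_side p q : in_range F [set p; q] -> p \in S -> q \notin S.
Proof.
move=> /splitS [p' [q' [E p'S q'S]]] pS; apply: contraNN q'S => qS.
by have /set2P[->|->] : q' \in [set p; q] by rewrite E set22.
Qed.

Lemma side_spec P : is_profile P ->
  exists2 q, F P = [set side P; q] & side P \in S /\ q \notin S.
Proof.
move=> hP; have [p [q [FP pS qS]]] := splitS (ex_intro _ P (conj hP erefl)).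
suff -> : side P = p by exists q.
rewrite /side; case: pickP => [x|/(_ p)]; last by rewrite FP inE set21 pS.
by rewrite FP !inE => /andP[/orP[]/eqP-> // qS']; rewrite qS' in qS.
Qed.

(* Were the S-part lowered from b1 to b2, then in the new profile voter i could report
   b1 > b2 > c2 and obtain {b1, c2}, improving its best or its worst element. *)
Lemma side_deviation P i L' : is_profile P -> linear_order L' ->
  {in S &, L' =2 P i} -> ~ P i (side P) (side (upd P i L')).
Proof.
move=> hP linL' agree.
set P' := upd P i L'; set b1 := side P; set b2 := side P' => Pb12.
have hP' : is_profile P' := upd_profile i hP linL'.
have [c1 FP [b1S c1S]] := side_spec hP.
have [c2 FP' [b2S c2S]] := side_spec hP'.
have b12 : b1 != b2 := linear_neq (hP i) Pb12.
have [b1c2 b2c2] : b1 != c2 /\ b2 != c2 by split; apply: contraNneq c2S => <-.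
have c1b1 : c1 != b1 by apply: contraNneq c1S => ->.
pose M := rank_first [:: b1; b2; c2]; have linM : linear_order M := rank_first_linear _.
have Mb2c2 : M b2 c2 by rewrite /M rank_first_cons ?rank_first_head // eq_sym.
set PM := upd P i M; have hPM : is_profile PM := upd_profile i hP linM.
have FPM : F PM = [set b1; c2].
  have [b [w [FPM Mbw]]] := card2_linear linM (consF hPM).
  have := dominates_deviation i hPM (hP i); rewrite /PM upd_upd upd_id upd_eq -/PM FPM FP.
  move=> /(dominates_pair Mbw (rank_first_head _ c1b1)) [bb1 _].
  have {}bb1 : b = b1 by case: bb1; rewrite // /M rank_first_above_head.
  have := dominates_deviation i hPM linL'; rewrite /PM upd_upd upd_eq -/PM -/P' FPM FP'.
  case/(dominates_pair Mbw Mb2c2) => _ [wc2|/rank_first_above_cons[wb1|]].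
  - by rewrite bb1 wc2.
  - by rewrite wb1 -bb1 linear_irr in Mbw.
  case/rank_first_above_cons => [wb2|]; last by rewrite rank_first_above_head.
  have R12 : in_range F [set b1; b2] by exists PM; rewrite FPM bb1 wb2.
  by rewrite (negPf (in_range_side R12 b1S)) in b2S.
have Lb12 : L' b1 b2 by rewrite agree.
have := dominates_deviation i hP' linM; rewrite /P' upd_eq upd_upd -/PM FPM -/P' FP'.
case: (linear_total linL' b2c2) (linear_total linL' b1c2) => [L2|L2] [L1|L1].
- by case/(dominates_pair L2 L1) => /(weakly_above_below linL'); rewrite Lb12.
- by move: (linear_trans linL' L2 L1); rewrite (linear_asym linL' Lb12).
- by rewrite setUC => /(dominates_pair L2 L1) [/(weakly_above_below linL')]; rewrite L1.
- rewrite setUC [[set b1; c2]]setUC => /(dominates_pair L2 L1) [_].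
  by move=> /(weakly_above_below linL'); rewrite Lb12.
Qed.

Lemma side_upd P i L' : is_profile P -> linear_order L' ->
  {in S &, L' =2 P i} -> side (upd P i L') = side P.
Proof.
move=> hP linL' agree; have hP' := upd_profile i hP linL'.
have [_ _ [S2 _]] := side_spec hP'; have [_ _ [S1 _]] := side_spec hP.
have [//|ne] := eqVneq (side (upd P i L')) (side P).
case: (linear_total (hP i) ne) => Pi; last by case: (side_deviation hP linL' agree).
case: (side_deviation (i := i) hP' (hP i)); first by move=> x y xS yS; rewrite upd_eq agree.
by rewrite upd_upd upd_id upd_eq agree.
Qed.

Lemma side_agree P P' : is_profile P -> is_profile P' ->
  (forall v, {in S &, P' v =2 P v}) -> side P' = side P.
Proof.
move=> hP hP' agree; apply: (@upd_chain _ _ (fun R => side R = side P) P P') => // Q i mixQ <-.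
have hQ : is_profile Q by move=> v; case: (mixQ v) => ->.
apply: side_upd => // x y xS yS.
by case: (mixQ i) => ->; rewrite ?agree.
Qed.

Lemma side_restr : d \in S ->
  exists G : (V -> rel {x : A | x \in S}) -> {x : A | x \in S},
    forall P : V -> rel A, is_profile P -> val (G (@restr V A P S)) = side P.
Proof.
move=> dS; pose d0 : {x : A | x \in S} := exist _ d dS.
exists (fun Q => if pselect (exists P, is_profile P /\ @restr V A P S = Q) is left ex
         then insubd d0 (side (sval (cid ex))) else d0) => P hP.
case: pselect => [ex|]; last by case; exists P.
case: (cid ex) => P' [hP' EP'] /=.
have [_ _ [S' _]] := side_spec hP'; rewrite val_insubd S'.
apply: side_agree => // v x y xS yS.
by have := congr1 (fun Q => Q v (exist _ x xS) (exist _ y yS)) EP'.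
Qed.

End Side.

Lemma splits_rangeC S : splits_range S -> splits_range (~: S).
Proof.
move=> splitS X /splitS [p [q [-> pS qS]]].
by exists q, p; rewrite setUC !inE pS qS.
Qed.

Lemma splits_range_reducible S : splits_range S -> reducible F.
Proof.
move=> splitS; have [b [c [_ bS cS]]] := splitS _ (in_range_profile (rank_first_linear [::])).
have splitC := splits_rangeC splitS.
have [G hG] := side_restr splitS bS.
have cC : c \in ~: S by rewrite inE.
have [H hH] := side_restr splitC cC.
exists S, (~: S); split; first by rewrite setICr.
split; first by rewrite setUCr.
exists G, H => P hP; rewrite hG // hH //.
have [q FP [bP _]] := side_spec b splitS hP.
have [q' FP' [cP _]] := side_spec c splitC hP.
have : side (~: S) c P \in F P by rewrite FP' set21.
rewrite FP => /set2P[E|->] //.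
by move: cP; rewrite E inE bP.
Qed.

Hypothesis viableF : weakly_viable F.

Definition paired (p q : A) : Prop := p != q /\ in_range F [set p; q].

Lemma paired_sym p q : paired p q -> paired q p.
Proof. by rewrite /paired setUC eq_sym. Qed.

Lemma range_pair_swap s t u : s != t -> s != u -> t != u ->
  ~ in_range F [set s; t] -> in_range F [set t; u] -> in_range F [set s; u].
Proof.
move=> st su tu nRst [Q [hQ FQ]].
pose L := rank_first [:: s; t; u]; have linL : linear_order L := rank_first_linear _.
have Ltu : L t u by rewrite /L rank_first_cons ?rank_first_head // eq_sym.
have [b [w [FP Lbw]]] := card2_linear linL (in_range_card (in_range_profile linL)).
have [Q' [hQ' sQ']] := viableF s.
have [r rs FQ'] := card2_mem (consF hQ') sQ'.
have := dominates_unanimous linL hQ'; rewrite FP FQ'.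
move=> /(dominates_pair Lbw (rank_first_head _ rs)) [bs _].
have {}bs : b = s by case: bs; rewrite // /L rank_first_above_head.
have := dominates_unanimous linL hQ; rewrite FP FQ => /(dominates_pair Lbw Ltu) [_].
case=> [wu|/rank_first_above_cons[ws|/rank_first_above_cons[wt|]]].
- by exists (fun _ => L); split=> //; rewrite FP bs wu.
- by rewrite ws -bs linear_irr in Lbw.
- by case: nRst; exists (fun _ => L); split=> //; rewrite FP bs wt.
- by rewrite rank_first_above_head.
Qed.

Lemma unpaired_trans t s u : ~ paired t s -> ~ paired s u -> ~ paired t u.
Proof.
move=> nts nsu [tu Rtu].
have [ets|ts] := eqVneq t s; first by apply: nsu; rewrite -ets.
have [esu|su] := eqVneq s u; first by apply: nts; rewrite esu.
apply: nsu; split=> //; apply: (range_pair_swap _ su tu _ Rtu); first by rewrite eq_sym.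
by rewrite setUC => Rts; apply: nts.
Qed.

Lemma triangle_common_neighbour x y z u v :
  paired x y -> paired x z -> paired y z ->
  exists2 p, p \in [set x; y; z] & paired p u /\ paired p v.
Proof.
move=> pxy pxz pyz; apply: contrapT => none.
have miss p : p \in [set x; y; z] -> ~ paired p u \/ ~ paired p v.
  by move=> hp; apply/not_andP => puv; apply: none; exists p.
have apart p q w : paired p q -> ~ paired p w -> ~ paired q w -> False.
  by move=> pq pw qw; apply: unpaired_trans pw _ pq => /paired_sym.
have [Tx Ty Tz] : [/\ x \in [set x; y; z], y \in [set x; y; z] & z \in [set x; y; z]].
  by rewrite !inE !eqxx !orbT.
case: (miss x Tx) (miss y Ty) (miss z Tz) => [hx|hx] [hy|hy] [hz|hz];
  first [exact: apart pxy hx hy | exact: apart pxz hx hz | exact: apart pyz hy hz].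
Qed.

Lemma first_second_share t u w : paired t u -> paired t w -> u != w ->
  first_second (in_range F) (alpha (rank_first [:: t; u; w])) [set t; u] [set t; w].
Proof.
move=> [tu Rtu] [tw Rtw] uw; pose L := rank_first [:: t; u; w].
have linL : linear_order L := rank_first_linear _.
have top x : x != t -> L t x by apply: rank_first_head.
have Ltu : L t u by apply: top; rewrite eq_sym.
have Ltw : L t w by apply: top; rewrite eq_sym.
have wtu : w \notin [set t; u] by rewrite !inE negb_or !(eq_sym w) tw uw.
do 2 (split=> //); split; first exact: elimN eqP (set2_neq t wtu).
split=> Z /in_range_card /(card2_linear linL) [b [v [-> Lbv]]] Zt.
  rewrite alpha_pairE //; have [bt|bt] := eqVneq b t; last by left; apply: top.
  have vt : v != t by rewrite -bt eq_sym (linear_neq linL Lbv).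
  have vu : v != u by apply: contra_not_neq Zt => ->; rewrite bt.
  by right; rewrite /L rank_first_cons ?rank_first_head // eq_sym.
move=> Zw; rewrite alpha_pairE //; have [bt|bt] := eqVneq b t; last by left; apply: top.
have vt : v != t by rewrite -bt eq_sym (linear_neq linL Lbv).
have vu : v != u by apply: contra_not_neq Zt => ->; rewrite bt.
have vw : v != w by apply: contra_not_neq Zw => ->; rewrite bt.
by right; rewrite /L (rank_first_cons (a := t)) ?(rank_first_cons (a := u))
  ?rank_first_head // eq_sym.
Qed.

Lemma connected_share t u w : paired t u -> paired t w -> u != w ->
  connected_in (in_range F) (@alpha_domain A) [set t; u] [set t; w].
Proof.
move=> ptu ptw uw; split.
  exists (alpha (rank_first [:: t; u; w])); split; last exact: first_second_share.
  by exists (rank_first [:: t; u; w]); split=> //; apply: rank_first_linear.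
exists (alpha (rank_first [:: t; w; u])); split.
  by exists (rank_first [:: t; w; u]); split=> //; apply: rank_first_linear.
by apply: first_second_share ptw ptu _; rewrite eq_sym.
Qed.

Lemma no_triangle_reducible :
  ~ (exists x y z, [/\ paired x y, paired x z & paired y z]) -> reducible F.
Proof.
move=> notri.
have /eqP /cards2P [b _] := in_range_card (in_range_profile (rank_first_linear [::])).
pose S := [set x | `[< ~ paired x b >]].
have inS x : reflect (~ paired x b) (x \in S) by rewrite inE; apply: asboolP.
apply: (@splits_range_reducible S) => X RX.
have /eqP /cards2P [p [q [pq EX]]] := in_range_card RX.
have ppq : paired p q by split; rewrite -?EX.
have [pS|/contrapT pb] := inS p.
  exists p, q; split=> //; first exact/inS.
  by apply/inS => qb; apply: unpaired_trans pS (fun bq => qb (paired_sym bq)) ppq.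
have [qS|/contrapT qb] := inS q; first by exists q, p; rewrite setUC; split=> //; apply/inS.
by case: notri; exists b, p, q; split=> //; apply: paired_sym.
Qed.

Section Triangle.
Variables x y z : A.
Hypotheses (pxy : paired x y) (pxz : paired x z) (pyz : paired y z).

Notation connected := (connected_in (in_range F) (@alpha_domain A)).

Definition triangle_pairs : seq {set A} := [:: [set x; y]; [set x; z]; [set y; z]].

Definition touches (X : {set A}) : bool := [exists p in X, p \in [set x; y; z]].

Definition range_seq : seq {set A} := [seq X <- enum {set A} | `[< in_range F X >]].

Definition near_pairs : seq {set A} :=
  [seq X <- range_seq | touches X && (X \notin triangle_pairs)].

Definition far_pairs : seq {set A} := [seq X <- range_seq | ~~ touches X].

Definition range_enum : seq {set A} := (triangle_pairs ++ near_pairs) ++ far_pairs.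

Lemma triangle_neq : [/\ x != y, x != z & y != z].
Proof. by case: pxy pxz pyz => xy _ [xz _] [yz _]. Qed.

Lemma mem_range_seq X : (X \in range_seq) = `[< in_range F X >].
Proof. by rewrite mem_filter mem_enum andbT. Qed.

Lemma touches_pair p q : p \in [set x; y; z] -> touches [set p; q].
Proof. by move=> pT; apply/existsP; exists p; rewrite set21. Qed.

Lemma triangle_pairsP X :
  X \in triangle_pairs -> in_range F X /\ touches X.
Proof.
case: pxy pxz pyz => _ Rxy [_ Rxz] [_ Ryz].
rewrite /triangle_pairs !inE => /or3P[]/eqP-> //; split=> //;
  by apply: touches_pair; rewrite !inE eqxx ?orbT.
Qed.

Lemma mem_touching X :
  in_range F X -> touches X -> X \in triangle_pairs ++ near_pairs.
Proof.
move=> RX tX; rewrite mem_cat mem_filter tX mem_range_seq.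
by case: (X \in triangle_pairs); rewrite //=; apply/asboolP.
Qed.

Lemma linked_triangle_pairs : linked_seq connected set0 triangle_pairs.
Proof.
have [xy xz yz] := triangle_neq.
have zxy : z \notin [set x; y] by rewrite !inE negb_or !(eq_sym z) xz yz.
rewrite -[triangle_pairs]/([:: [set x; y]; [set x; z]] ++ [:: [set y; z]]).
apply: linked_seq_cat; first exact: linked_seq_pair (connected_share pxy pxz yz).
move=> _ /[!inE] /eqP->; exists [set x; y], [set x; z]; split.
- exact: mem_head.
- by rewrite !inE eqxx orbT.
- exact: set2_neq.
- by rewrite [[set x; y]]setUC; apply: connected_share pyz (paired_sym pxy) _; rewrite eq_sym.
- rewrite setUC [[set x; z]]setUC.
  by apply: connected_share (paired_sym pyz) (paired_sym pxz) _; rewrite eq_sym.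
Qed.

Lemma near_pairs_neighbours X : X \in near_pairs ->
  exists a b, [/\ a \in triangle_pairs, b \in triangle_pairs, a != b,
                  connected X a & connected X b].
Proof.
rewrite mem_filter mem_range_seq => /andP[/andP[/existsP[p /andP[pX pT]] Xn] /asboolP RX].
have [w wp EX] := card2_mem (in_range_card RX) pX.
have ppw : paired p w by split; rewrite -?EX // eq_sym.
rewrite EX in Xn *.
have vertex q r : [set p; q] \in triangle_pairs -> [set p; r] \in triangle_pairs ->
    paired p q -> paired p r -> q != r ->
    exists a b, [/\ a \in triangle_pairs, b \in triangle_pairs, a != b,
                    connected [set p; w] a & connected [set p; w] b].
  move=> Tq Tr ppq ppr qr; exists [set p; q], [set p; r]; split=> //.
  - by apply: set2_neq; rewrite !inE negb_or !(eq_sym r) ppr.1.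
  - by apply: connected_share => //; apply: contraNneq Xn => ->.
  - by apply: connected_share => //; apply: contraNneq Xn => ->.
have [xy xz yz] := triangle_neq.
move: pT; rewrite !inE => /orP[/orP[]|] /eqP pE; subst p.
- by apply: vertex pxy pxz yz; rewrite !inE eqxx ?orbT.
- apply: vertex (paired_sym pxy) pyz xz; rewrite ?[[set y; x]]setUC !inE eqxx ?orbT //.
- apply: vertex (paired_sym pxz) (paired_sym pyz) xy.
    by rewrite setUC !inE eqxx orbT.
  by rewrite setUC !inE eqxx !orbT.
Qed.

Lemma far_pairs_neighbours X : X \in far_pairs ->
  exists a b, [/\ a \in triangle_pairs ++ near_pairs, b \in triangle_pairs ++ near_pairs,
                  a != b, connected X a & connected X b].
Proof.
rewrite mem_filter mem_range_seq => /andP[_ /asboolP RX].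
have /eqP/cards2P [u [v [uv EX]]] := in_range_card RX.
have puv : paired u v by split; rewrite -?EX.
have [p pT [ppu ppv]] := triangle_common_neighbour u v pxy pxz pyz.
exists [set p; u], [set p; v]; split.
- by apply: mem_touching; [exact: ppu.2 | exact: touches_pair].
- by apply: mem_touching; [exact: ppv.2 | exact: touches_pair].
- by apply: set2_neq; rewrite !inE negb_or !(eq_sym v) ppv.1.
- rewrite EX [[set p; u]]setUC; apply: connected_share puv (paired_sym ppu) _.
  by rewrite eq_sym ppv.1.
- rewrite EX setUC [[set p; v]]setUC.
  by apply: connected_share (paired_sym puv) (paired_sym ppv) _; rewrite eq_sym ppu.1.
Qed.

Lemma uniq_triangle_pairs : uniq triangle_pairs.
Proof.
have [xy xz yz] := triangle_neq.
have zxy : z \notin [set x; y] by rewrite !inE negb_or !(eq_sym z) xz yz.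
have xyz : x \notin [set y; z] by rewrite !inE negb_or xy xz.
by rewrite /= !inE negb_or !(set2_neq _ zxy) eq_sym [[set x; z]]setUC set2_neq.
Qed.

Lemma uniq_range_enum : uniq range_enum.
Proof.
have uniq_range : uniq range_seq by apply/filter_uniq/enum_uniq.
have nearN : ~~ has (mem triangle_pairs) near_pairs.
  by apply/hasPn => X; rewrite mem_filter => /andP[/andP[]].
have farN : ~~ has (mem (triangle_pairs ++ near_pairs)) far_pairs.
  apply/hasPn => X; rewrite mem_filter => /andP[nX _]; apply: contra nX.
  by rewrite inE mem_cat => /orP[/triangle_pairsP[]//|]; rewrite mem_filter => /andP[/andP[]].
rewrite cat_uniq [uniq (_ ++ _)]cat_uniq uniq_triangle_pairs nearN farN.
by rewrite !(filter_uniq _ uniq_range).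
Qed.

Lemma mem_range_enum X : X \in range_enum <-> in_range F X.
Proof.
split; last first.
  move=> RX; rewrite mem_cat; have [tX|tX] := boolP (touches X); first by rewrite mem_touching.
  by apply/orP; right; rewrite mem_filter tX mem_range_seq; apply/asboolP.
rewrite !mem_cat => /orP[/orP[/triangle_pairsP[]//|]|]; rewrite mem_filter mem_range_seq;
  by move=> /andP[_ /asboolP].
Qed.

Lemma triangle_linked : linked (in_range F) (@alpha_domain A).
Proof.
apply: (linked_seq_linked (x0 := set0) uniq_range_enum mem_range_enum).
apply: linked_seq_cat far_pairs_neighbours.
exact: linked_seq_cat linked_triangle_pairs near_pairs_neighbours.
Qed.

End Triangle.

End ConsularRule.

Theorem proposition51 (V A : finType) (F : (V -> rel A) -> {set A}) :
  0 < #|V| ->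
  consular F -> irreducible F -> weakly_viable F -> SPP F -> SPO F ->
  (forall M, alpha_domain M -> linear_on (in_range F) M) /\
  linked (in_range F) (@alpha_domain A).
Proof.
move=> _ consF irrF viableF sppF spoF; split.
  move=> _ [L [linL ->]]; apply: linear_on_sub (alpha_linear_on_pairs linL).
  exact: in_range_card.
have [[x [y [z [pxy pxz pyz]]]]|notri] :=
  pselect (exists x y z, [/\ paired F x y, paired F x z & paired F y z]).
  exact: triangle_linked pxy pxz pyz.
by case: irrF; apply: no_triangle_reducible notri.
Qed.
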